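(* Let $E\subseteq\mathbb{R}$ and let $(f_n)$ be a sequence of functions $E\to\mathbb{R}$, each Abel continuous on $E$, such that $(f_n)$ converges uniformly on $E$ to a function $f:E\to\mathbb{R}$. Then $f$ is Abel continuous on $E$.
   Context: A sequence $(p_n)_{n\ge0}$ is Abel convergent to $\ell$ if $\sum_{k=0}^{\infty}p_k x^k$ converges for every $0\le x<1$ and $\lim_{x\to 1^-}(1-x)\sum_{k=0}^{\infty}p_k x^k=\ell$. A function $g:E\to\mathbb{R}$ is Abel continuous on $E$ if for every sequence $(p_n)$ in $E$ Abel convergent to some $\ell\in E$, $(g(p_n))$ is Abel convergent to $g(\ell)$. *)

From Stdlib Require Import Reals.
From Coquelicot Require Import Coquelicot.
Open Scope R_scope.

Definition abel_convergent (p : nat -> R) (l : R) : Prop :=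
  (forall x : R, 0 <= x < 1 -> ex_series (fun k => p k * x ^ k)) /\
  filterlim (fun x => (1 - x) * Series (fun k => p k * x ^ k))
            (at_left 1) (locally l).

Definition abel_continuous_on (E : R -> Prop) (g : R -> R) : Prop :=
  forall (p : nat -> R) (l : R),
    (forall n, E (p n)) -> E l -> abel_convergent p l ->
    abel_convergent (fun n => g (p n)) (g l).

Definition unif_conv_on (E : R -> Prop) (fn : nat -> R -> R) (f : R -> R) : Prop :=
  forall eps : R, 0 < eps ->
    exists N : nat, forall n : nat, (N <= n)%nat ->
      forall x : R, E x -> Rabs (fn n x - f x) < eps.

From Stdlib Require Import Reals Lra ssreflect.
From Coquelicot Require Import Coquelicot.
Open Scope R_scope.

(* If [|p_k - q_k| <= eps] for all [k] then the Abel means of [p] and [q]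
   differ by at most [(1 - x) * eps / (1 - x) = eps] at every [x], so Abel
   convergence survives uniform approximation.  With [q = f_N o p] this is
   the theorem: [f_N o p] is Abel convergent to [f_N l] by hypothesis. *)

Definition abel_mean (p : nat -> R) (x : R) : R :=
  (1 - x) * Series (fun k => p k * x ^ k).

Lemma is_series_scal_geom (c x : R) : 0 <= x < 1 ->
  is_series (fun k => c * x ^ k) (c / (1 - x)).
Proof.
  move=> Hx; apply: is_series_scal_l; apply: is_series_geom.
  rewrite Rabs_pos_eq; lra.
Qed.

Lemma bounded_power_series (d : nat -> R) (c x : R) :
  (forall k, Rabs (d k) <= c) -> 0 <= x < 1 ->
  ex_series (fun k => d k * x ^ k) /\
  Rabs (Series (fun k => d k * x ^ k)) <= c / (1 - x).
Proof.
  move=> Hd Hx.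
  have Hdom : forall k, Rabs (d k * x ^ k) <= c * x ^ k.
  { move=> k; rewrite Rabs_mult -RPow_abs (Rabs_pos_eq x); last lra.
    apply: Rmult_le_compat_r; [apply: pow_le; lra | exact: Hd]. }
  have Hgeom : ex_series (fun k => c * x ^ k)
    by eexists; apply: is_series_scal_geom.
  have Habs : ex_series (fun k => Rabs (d k * x ^ k)).
  { apply: ex_series_le Hgeom => k; rewrite /norm /= /abs /= Rabs_Rabsolu; exact: Hdom. }
  split; first exact: ex_series_Rabs.
  apply: Rle_trans (Series_Rabs _ Habs) _.
  rewrite -(is_series_unique _ _ (is_series_scal_geom c x Hx)).
  apply: Series_le Hgeom => k; split; [exact: Rabs_pos | exact: Hdom].
Qed.

Lemma abel_mean_close (a b : nat -> R) (e x : R) :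
  (forall k, Rabs (a k - b k) <= e) -> 0 <= x < 1 ->
  ex_series (fun k => b k * x ^ k) ->
  ex_series (fun k => a k * x ^ k) /\
  Rabs (abel_mean a x - abel_mean b x) <= e.
Proof.
  move=> Hab Hx Hb.
  have [Hd Hbound] := bounded_power_series (fun k => a k - b k) e x Hab Hx.
  have Ha : ex_series (fun k => a k * x ^ k).
  { apply: ex_series_ext (ex_series_plus _ _ Hd Hb) => k.
    rewrite /plus /=; ring. }
  split; first exact: Ha.
  rewrite /abel_mean -Rmult_minus_distr_l -Series_minus //.
  rewrite (Series_ext _ (fun k => (a k - b k) * x ^ k)); last by move=> k; ring.
  rewrite Rabs_mult (Rabs_pos_eq (1 - x)); last lra.
  apply: Rle_trans (Rmult_le_compat_l (1 - x) _ _ _ Hbound) _; first lra.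
  right; field; lra.
Qed.

Lemma at_left_1_unit_interval : at_left 1 (fun x => 0 <= x < 1).
Proof.
  exists (mkposreal _ Rlt_0_1) => y /= Hy Hlt; split; last exact: Hlt.
  move: Hy; rewrite /ball /= /AbsRing_ball /abs /minus /plus /opp /=.
  move/Rabs_lt_between; lra.
Qed.

Lemma abel_convergent_unif_approx (p : nat -> R) (l : R) :
  (forall eps, 0 < eps -> exists (q : nat -> R) (m : R),
     (forall k, Rabs (p k - q k) <= eps) /\ Rabs (l - m) <= eps /\
     abel_convergent q m) ->
  abel_convergent p l.
Proof.
  move=> Happrox; split.
  { move=> x Hx.
    have [q [m [Hpq [_ [Hq _]]]]] := Happrox 1 Rlt_0_1.
    by case: (abel_mean_close p q 1 x Hpq Hx (Hq x Hx)). }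
  apply/filterlim_locally => eps.
  have He3 : 0 < eps / 3 by case: eps => /= e He; lra.
  have [q [m [Hpq [Hlm [Hq Hqlim]]]]] := Happrox _ He3.
  move/filterlim_locally/(_ (mkposreal _ He3)): Hqlim => Hnear.
  apply: filter_imp (filter_and _ _ Hnear at_left_1_unit_interval).
  move=> x [Hball Hx].
  have [_ Hclose] := abel_mean_close p q _ x Hpq Hx (Hq x Hx).
  move: Hball; rewrite /ball /= /AbsRing_ball /abs /minus /plus /opp /=.
  rewrite -/(abel_mean q x) -/(abel_mean p x) -/(Rminus _ m) => Hball.
  have Htri : Rabs (abel_mean p x - l) <=
      Rabs (abel_mean p x - abel_mean q x) + Rabs (abel_mean q x - m)
      + Rabs (l - m).
  { rewrite -(Rabs_Ropp (l - m)).
    have -> : abel_mean p x - l = (abel_mean p x - abel_mean q x)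
        + (abel_mean q x - m) + - (l - m) by ring.
    apply: Rle_trans (Rabs_triang _ _) _.
    apply: Rplus_le_compat_r; exact: Rabs_triang. }
  rewrite -/(Rminus _ l); lra.
Qed.

Theorem theorem8 (E : R -> Prop) (fn : nat -> R -> R) (f : R -> R) :
  (forall n : nat, abel_continuous_on E (fn n)) ->
  unif_conv_on E fn f ->
  abel_continuous_on E f.
Proof.
  move=> Hcont Hunif p l Hp Hl Habel.
  apply: abel_convergent_unif_approx => eps Heps.
  have [N HN] := Hunif eps Heps.
  exists (fun k => fn N (p k)), (fn N l); split; [|split].
  - move=> k; rewrite Rabs_minus_sym; apply: Rlt_le; exact: HN.
  - rewrite Rabs_minus_sym; apply: Rlt_le; exact: HN.
  - exact: Hcont.
Qed.
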